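(* Let $\mathbb{F}$ be a field of characteristic zero, $d\ge 2$, $n\ge 0$ an integer, and let $a_{k,j}\in\mathbb{F}$ ($2\le k\le n$, $2\le j\le d$) be arbitrary. Let $L_0,\dots,L_n\in\mathbb{F}[x_1,\dots,x_d]$ be defined recursively by $L_0=1$, $L_1=x_1$ and, for $2\le k\le n$, $$L_k=\Psi_1(M_1)+\Psi_2\big((M_2)_{i_1=0}\big)+\dots+\Psi_d\big((M_d)_{i_1=\dots=i_{d-1}=0}\big)+a_{k,2}x_2+\dots+a_{k,d}x_d,$$ where $M_1=L_{k-1}$ and $M_j=\sum_{t=2}^{k-1}a_{t,j}L_{k-t}$ for $2\le j\le d$. Define $$q^*_{n,m}=\sum \frac{a_{2,2}^{\gamma_{2,2}}\cdots a_{n,2}^{\gamma_{2,n}}\cdots a_{2,d}^{\gamma_{d,2}}\cdots a_{n,d}^{\gamma_{d,n}}}{\gamma_{1,1}!\,\gamma_{2,2}!\cdots\gamma_{2,n}!\cdots\gamma_{d,2}!\cdots\gamma_{d,n}!}\,x_1^{\gamma_{1,1}}\,x_2^{\gamma_{2,2}+\dots+\gamma_{2,n}}\cdots x_d^{\gamma_{d,2}+\dots+\gamma_{d,n}},$$ the sum running over all nonnegative integers $\gamma_{1,1}$ and $\gamma_{s,j}$ ($2\le s\le d$, $2\le j\le n$) with $$\gamma_{1,1}+2(\gamma_{2,2}+\dots+\gamma_{d,2})+\dots+n(\gamma_{2,n}+\dots+\gamma_{d,n})=m.$$ Then $q^*_{n,m}=L_m$ for all $m=0,1,\dots,n$.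
   Context: $\Psi_j$ is the $\mathbb{F}$-linear operator on $\mathbb{F}[x_1,\dots,x_d]$ given on monomials by $\Psi_j(x_1^{\alpha_1}\cdots x_d^{\alpha_d})=\frac{1}{\alpha_j+1}x_1^{\alpha_1}\cdots x_j^{\alpha_j+1}\cdots x_d^{\alpha_d}$. For a polynomial $M$, $(M)_{i_1=\dots=i_{j-1}=0}$ denotes the polynomial consisting of those terms of $M$ that contain none of the variables $x_1,\dots,x_{j-1}$. The convention $0^0=1$ is used. ($q^*_{n,m}$ is the specialization of the polynomial $q_{n,m}=\sum_{\tau=m}\frac{\mathbf c_1^{\pmb\gamma_1}\cdots\mathbf c_d^{\pmb\gamma_d}}{\pmb\gamma_1!\cdots\pmb\gamma_d!}x_1^{|\pmb\gamma_1|}\cdots x_d^{|\pmb\gamma_d|}$, $\tau=\sum_j b_j\sum_i\gamma_{i,j}$, to $\mathbf b=(1,2,\dots,n)$, $\mathbf c_1=(1,0,\dots,0)$, $\mathbf c_s=(0,a_{2,s},\dots,a_{n,s})$.) *)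

From mathcomp Require Import all_boot all_order all_algebra.
From mathcomp Require Import mpoly.
Set Implicit Arguments. Unset Strict Implicit. Unset Printing Implicit Defensive.
Import GRing.Theory.
Local Open Scope ring_scope.

(* Variables x_1, ..., x_d are 'X_i for i : 'I_d, with x_(k+1) = 'X_i when val i = k. *)

Section Defs.
Variables (F : fieldType) (d : nat).

(* Psi_j (paper's index j = val j + 1): on monomials
   x^alpha |-> 1/(alpha_j+1) x^(alpha + e_j), extended linearly. *)
Definition Psi (j : 'I_d) (p : {mpoly F[d]}) : {mpoly F[d]} :=
  \sum_(m <- msupp p)
     ((p@_m) / ((m j).+1)%:R) *: 'X_[[multinom (m i + (i == j)) | i < d]].

(* (M)_{i_1 = ... = i_{j-1} = 0} for paper index j = val j + 1:
   the terms of M containing none of the variables x_1, ..., x_{j-1}. *)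
Definition trunc (j : 'I_d) (p : {mpoly F[d]}) : {mpoly F[d]} :=
  \sum_(m <- msupp p | [forall i : 'I_d, (val i < val j)%N ==> (m i == 0%N)])
     (p@_m) *: 'X_[m].

Definition x1 : {mpoly F[d]} :=
  'X_[[multinom (if val i == 0%N then 1%N else 0%N) | i < d]].

(* a k j stands for a_{k,j} (paper indices). *)
Variable a : nat -> nat -> F.

(* Given Ls = [:: L_0; ...; L_(k-1)] (k = size Ls >= 2), compute L_k. *)
Definition Lstep (Ls : seq {mpoly F[d]}) : {mpoly F[d]} :=
  let k := size Ls in
  let M (j : 'I_d) : {mpoly F[d]} :=
    if val j == 0%N then nth 0 Ls k.-1
    else \sum_(2 <= t < k) a t (val j).+1 *: nth 0 Ls (k - t) in
  \sum_(j < d) Psi j (trunc j (M j))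
  + \sum_(j < d | (1 <= val j)%N) a k (val j).+1 *: 'X_j.

Fixpoint Lseq (k : nat) : seq {mpoly F[d]} :=
  match k with
  | 0 => [:: 1]
  | 1 => [:: 1; x1]
  | k'.+1 => rcons (Lseq k') (Lstep (Lseq k'))
  end.

Definition L (k : nat) : {mpoly F[d]} := nth 0 (Lseq k) k.

(* Index set of the gamma's: gamma (s, j) for s : 'I_d (paper s = val s + 1)
   and j : 'I_n.+2 (paper j = val j; the range 0..n+1 always
   contains 1). *)
Definition allowed (n : nat) (sj : 'I_d * 'I_n.+2) : bool :=
  ((val sj.1 == 0%N) && (val sj.2 == 1%N)) ||
  [&& (1 <= val sj.1)%N, (2 <= val sj.2)%N & (val sj.2 <= n)%N].

(* q*_{n,m}: sum over all gamma supported on allowed indices with weighted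
   sum m; each gamma entry is at most m (weights are >= 1), so gamma ranges
   over finite functions with values in 'I_m.+1. *)
Definition qstar (n m : nat) : {mpoly F[d]} :=
  \sum_(g : {ffun 'I_d * 'I_n.+2 -> 'I_m.+1} |
          [forall sj, ~~ allowed sj ==> (val (g sj) == 0%N)] &&
          (\sum_(sj | allowed sj) val sj.2 * val (g sj) == m)%N)
    ((\prod_(sj | allowed sj && (1 <= val sj.1)%N) a (val sj.2) (val sj.1).+1 ^+ g sj)
      / (\prod_(sj | allowed sj) ((val (g sj))`!)%:R)
     *: 'X_[[multinom (if val s == 0%N then val (g (s, inord 1))
                      else \sum_(j : 'I_n.+2 | (2 <= val j <= n)%N) val (g (s, j)))%N
             | s < d]]).

End Defs.

From mathcomp Require Import all_boot all_order all_algebra.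
From mathcomp Require Import mpoly.
From mathcomp Require Import zify.
Set Implicit Arguments. Unset Strict Implicit. Unset Printing Implicit Defensive.
Import GRing.Theory.
Local Open Scope ring_scope.

(* Both sides are compared coefficientwise.  For a monomial x^al <> 1 let x_j
   be its first variable (a "lead variable").  In L_k only Psi_j((M_j)_...)
   and a_{k,j} x_j can contribute, so al_j [x^al] L_k = [x^(al - e_j)] M_j
   (+ a_{k,j} if x^al = x_j).  In q*_{n,k}, al_j is the sum of the gamma_{j,t}
   of every term, and lowering one gamma_{j,t} by one maps the terms onto those
   of q*_{n,k-t}, giving al_j [x^al] q*_{n,k} = sum_t a_{t,j} [x^(al - e_j)]
   q*_{n,k-t} (and [x^(al - e_1)] q*_{n,k-1} when j = 1).  This is the same
   recursion, so strong induction on k concludes; characteristic zero is what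
   allows cancelling al_j. *)

Section Coefficients.
Variables (F : fieldType) (d : nat).
Implicit Types (p : {mpoly F[d]}) (al : 'X_{1..d}).

Lemma sum_msupp_pred1 p (c : 'X_{1..d} -> F) b :
  (b \notin msupp p -> c b = 0) -> \sum_(m <- msupp p | m == b) c m = c b.
Proof.
move=> cN; have [bp | bNp] := boolP (b \in msupp p); last first.
  by rewrite cN // big1_seq // => m /andP [/eqP -> bp]; rewrite bp in bNp.
rewrite (big_rem b bp) eqxx /= big1_seq ?addr0 // => m /andP [/eqP -> b_rem].
by rewrite mem_rem_uniqF ?msupp_uniq in b_rem.
Qed.

Lemma mcoeff_Psi (j : 'I_d) p al :
  (Psi j p)@_al = if (0 < al j)%N then p@_(al - U_(j)) / (al j)%:R else 0.
Proof.
have mnm_addU (m : 'X_{1..d}) : [multinom (m i + (i == j))%N | i < d] = (m + U_(j))%MM.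
  by apply/mnmP => i; rewrite mnmE mnmDE mnm1E eq_sym.
rewrite /Psi raddf_sum /=.
under eq_bigr do rewrite mcoeffZ mcoeffX mnm_addU mulr_natr mulrb.
case: ifP => [al_j | /negbT]; last first.
  rewrite -leqNgt leqn0 => /eqP al_j.
  rewrite big1 // => m _; case: eqP => // mal.
  by rewrite -mal mnmDE mnm1E eqxx addn1 in al_j.
have alE : al = (al - U_(j) + U_(j))%MM by rewrite submK // lep1mP -lt0n.
have -> : (al j)%:R = ((al - U_(j))%MM j).+1%:R :> F.
  by rewrite mnmBE mnm1E eqxx subn1 prednK.
rewrite -big_mkcondr /= {1}alE.
under eq_bigl do rewrite (can_eq (addmK _)).
by rewrite sum_msupp_pred1 // => /memN_msupp_eq0 ->; rewrite mul0r.
Qed.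

Lemma mcoeff_trunc (j : 'I_d) p al :
  (trunc j p)@_al =
  if [forall i : 'I_d, (val i < val j)%N ==> (al i == 0%N)] then p@_al else 0.
Proof.
rewrite /trunc raddf_sum /=.
under eq_bigr do rewrite mcoeffZ mcoeffX mulr_natr mulrb eq_sym.
rewrite -big_mkcondr /=; case: ifP => al_trunc.
  rewrite (eq_bigl (fun m => m == al)) => [|m].
    by rewrite sum_msupp_pred1 // => /memN_msupp_eq0.
  by rewrite eq_sym; case: eqP => [->|]; rewrite ?al_trunc ?andbF.
by rewrite big1 // => m /andP [m_trunc /eqP alm]; rewrite -alm al_trunc in m_trunc.
Qed.

Definition lead_var al (j : 'I_d) : bool :=
  (0 < al j)%N && [forall i : 'I_d, (val i < val j)%N ==> (al i == 0%N)].

Lemma exists_lead_var al : al != 0%MM -> exists j, lead_var al j.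
Proof.
move=> al_neq0; have [j0 al_j0] : exists j0, (0 < al j0)%N.
  apply/existsP; apply: contraR al_neq0 => /existsPn al0.
  by apply/eqP/mnmP => i; rewrite mnm0E; apply/eqP; rewrite -leqn0 leqNgt al0.
case: (@arg_minnP _ j0 (fun i => 0 < al i)%N val al_j0) => j al_j j_min.
exists j; rewrite /lead_var al_j; apply/forallP => i; apply/implyP => ltij.
by apply: contraTT ltij; rewrite -lt0n -leqNgt => /j_min.
Qed.

Lemma mpoly_eq_lead_var p q : [pchar F] =i pred0 -> p@_0 = q@_0 ->
  (forall al j, lead_var al j -> (al j)%:R * p@_al = (al j)%:R * q@_al) -> p = q.
Proof.
move=> hchar eq0 eq_lead; apply/mpolyP => al; have [-> // | al_neq0] := eqVneq al 0%MM.
have [j lead_j] := exists_lead_var al_neq0.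
apply: mulfI (eq_lead al j lead_j); move/pcharf0P: hchar => ->.
by rewrite -lt0n; case/andP: lead_j.
Qed.

Lemma subm1_eq0 al (j : 'I_d) : (0 < al j)%N ->
  ((al - U_(j))%MM == 0%MM) = (U_(j)%MM == al).
Proof.
move=> al_pos; apply/eqP/eqP => [al_U | <-].
  by rewrite -(submK (m := U_(j)) (m' := al)) ?al_U ?add0m // lep1mP -lt0n.
by apply/mnmP => i; rewrite mnmBE subnn mnm0E.
Qed.

Lemma mcoeff_sum_Psi_trunc (M : 'I_d -> {mpoly F[d]}) al j0 : lead_var al j0 ->
  (\sum_(j < d) Psi j (trunc j (M j)))@_al = (M j0)@_(al - U_(j0)) / (al j0)%:R.
Proof.
case/andP=> al_j0 /forallP al_lt.
rewrite raddf_sum (bigD1 j0) //= big1 ?addr0; last first.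
  move=> j j_neq0; rewrite mcoeff_Psi; case: ifP => // al_j.
  have lt_j0j : (val j0 < val j)%N.
    rewrite ltn_neqAle val_eqE eq_sym j_neq0 leqNgt /=.
    by apply: contraTN al_j => /(implyP (al_lt j)) /eqP ->.
  rewrite mcoeff_trunc ifN ?mul0r //; apply/forallPn; exists j0.
  by rewrite lt_j0j mnmBE mnm1E (negbTE j_neq0) subn0 -lt0n.
rewrite mcoeff_Psi mcoeff_trunc al_j0 ifT //; apply/forallP => i.
by apply/implyP => ltij; rewrite mnmBE (eqP (implyP (al_lt i) ltij)).
Qed.

Lemma mcoeff_sum_X (P : pred 'I_d) (c : 'I_d -> F) al j0 : lead_var al j0 ->
  (\sum_(j | P j) c j *: 'X_j)@_al = if P j0 && (U_(j0)%MM == al) then c j0 else 0.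
Proof.
case/andP=> al_j0 _.
have U_eq j : (U_(j)%MM == al) = (j == j0) && (U_(j0)%MM == al).
  case: (eqVneq j j0) => [-> // | j_neq0]; apply: contraNF j_neq0 => /eqP Ual.
  by move: al_j0; rewrite -Ual mnm1E; case: eqP.
rewrite raddf_sum /=.
under eq_bigr do rewrite mcoeffZ mcoeffX mulr_natr mulrb.
rewrite -big_mkcondr /=; case: ifP => cond.
  by rewrite (big_pred1 j0) // => j /=; rewrite U_eq; case: eqP => [->|]; rewrite ?andbF.
by rewrite big1 // => j; rewrite U_eq; case: eqP => [->|]; rewrite ?andbF //= cond.
Qed.

End Coefficients.

Section Lseq.
Variables (F : fieldType) (d : nat) (a : nat -> nat -> F).
Implicit Types (Ls : seq {mpoly F[d]}) (al : 'X_{1..d}).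
Local Notation Lseq := (@Lseq F d a).
Local Notation L := (@L F d a).

Lemma LseqSS k : Lseq k.+2 = rcons (Lseq k.+1) (Lstep a (Lseq k.+1)).
Proof. by []. Qed.

Lemma size_Lseq k : size (Lseq k) = k.+1.
Proof. by elim: k => [|[|k] IH] //; rewrite LseqSS size_rcons IH. Qed.

Lemma nth_Lseq k i : (i <= k)%N -> nth 0 (Lseq k) i = L i.
Proof.
elim: k i => [|[|k] IH] i; first by rewrite leqn0 => /eqP ->.
  by case: i => [|[|i]].
rewrite leq_eqVlt => /orP [/eqP -> // | lt_ik].
by rewrite LseqSS nth_rcons size_Lseq lt_ik IH.
Qed.

Lemma L_step k : L k.+2 = Lstep a (Lseq k.+1).
Proof. by rewrite /L LseqSS nth_rcons size_Lseq ltnn eqxx. Qed.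

Lemma mcoeff0_Lstep Ls : (Lstep a Ls)@_0%MM = 0.
Proof.
rewrite /Lstep mcoeffD !raddf_sum /= !big1 ?addr0 // => j _.
  by rewrite mcoeffZ mcoeffX mnm1_eq0 mulr0.
by rewrite mcoeff_Psi mnm0E.
Qed.

Hypothesis hchar : [pchar F] =i pred0.

Lemma mcoeff_Lstep Ls al j0 : lead_var al j0 ->
  (al j0)%:R * (Lstep a Ls)@_al =
  if val j0 == 0%N then (nth 0 Ls (size Ls).-1)@_(al - U_(j0))
  else \sum_(2 <= t < size Ls) a t (val j0).+1 * (nth 0 Ls (size Ls - t))@_(al - U_(j0))
       + a (size Ls) (val j0).+1 * (1 : {mpoly F[d]})@_(al - U_(j0)).
Proof.
move=> lead_j0; have al_pos : (0 < al j0)%N by case/andP: lead_j0.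
have al_neq0 : (al j0)%:R != 0 :> F by move/pcharf0P: hchar => ->; rewrite -lt0n.
rewrite /Lstep mcoeffD (mcoeff_sum_Psi_trunc _ lead_j0) (mcoeff_sum_X _ _ lead_j0).
rewrite mulrDr mulrC divfK // mcoeff1 subm1_eq0 //.
case: eqP => [j0_0 | /eqP j0_neq0] /=; first by rewrite j0_0 /= mulr0 addr0.
rewrite lt0n j0_neq0 /= raddf_sum /=; under eq_bigr do rewrite mcoeffZ.
congr (_ + _); case: eqP => [U_al | _]; last by rewrite !mulr0.
by rewrite -U_al mnm1E eqxx mul1r mulr1.
Qed.

End Lseq.

Section WeightedSum.
Variables (F : fieldType) (d : nat) (a : nat -> nat -> F) (n : nat).
Local Notation I := ('I_d * 'I_n.+2)%type.
Implicit Types (f : I -> nat) (e : I).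

Definition admissible f := [forall sj : I, ~~ allowed sj ==> (f sj == 0%N)].

Definition weight f := (\sum_(sj : I | allowed sj) val sj.2 * f sj)%N.

Definition gamma_coef f : F :=
  (\prod_(sj : I | allowed sj && (1 <= val sj.1)%N) a (val sj.2) (val sj.1).+1 ^+ f sj)
    / (\prod_(sj : I | allowed sj) ((f sj)`!)%:R).

Definition gamma_mono f : 'X_{1..d} :=
  [multinom (if val s == 0%N then f (s, inord 1)
             else \sum_(j : 'I_n.+2 | (2 <= val j <= n)%N) f (s, j))%N | s < d].

Definition gamma_of N (g : {ffun I -> 'I_N.+1}) : I -> nat := fun sj => val (g sj).

(* [qstar n m] is [qsum m m]; a common bound [N] on the gamma's lets the
   recursion relate different [m]. *)
Definition qsum N m : {mpoly F[d]} :=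
  \sum_(g : {ffun I -> 'I_N.+1} |
          admissible (gamma_of g) && (weight (gamma_of g) == m))
     gamma_coef (gamma_of g) *: 'X_[gamma_mono (gamma_of g)].

Definition var_coef e : F := if (1 <= val e.1)%N then a (val e.2) (val e.1).+1 else 1.

Definition incr_at e f : I -> nat := fun sj => (f sj + (sj == e))%N.

Lemma qstar_qsum_id m : @qstar F d a n m = qsum m m.
Proof. by []. Qed.

Lemma allowed_pos e : allowed e -> (0 < val e.2)%N.
Proof. by case/orP => [/andP [_ /eqP ->] // | /and3P [_ /ltnW]]. Qed.

Lemma leq_weight f e : allowed e -> (f e * val e.2 <= weight f)%N.
Proof. by move=> ae; rewrite /weight (bigD1 e) //= mulnC leq_addr. Qed.

Lemma leq_weight1 f e : allowed e -> (f e <= weight f)%N.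
Proof.
move=> ae; apply: leq_trans (leq_weight f ae).
by rewrite leq_pmulr ?allowed_pos.
Qed.

Lemma gamma_monoE f s : gamma_mono f s = (\sum_(j | allowed (s, j)) f (s, j))%N.
Proof.
rewrite mnmE /allowed /=; have [s0 | s_neq0] := eqVneq (val s) 0%N.
  rewrite (big_pred1 (inord 1)) // => j /=.
  by rewrite s0 orbF -val_eqE /= inordK.
by rewrite lt0n s_neq0.
Qed.

Lemma leq_gamma_mono f e : allowed e -> (f e <= gamma_mono f e.1)%N.
Proof. by case: e => s j ae; rewrite gamma_monoE (bigD1 j) //= leq_addr. Qed.

Lemma eq_admissible f1 f2 : f1 =1 f2 -> admissible f1 = admissible f2.
Proof. by move=> eq_f; apply: eq_forallb => sj; rewrite eq_f. Qed.

Lemma eq_weight f1 f2 : f1 =1 f2 -> weight f1 = weight f2.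
Proof. by move=> eq_f; apply: eq_bigr => sj _; rewrite eq_f. Qed.

Lemma eq_gamma_coef f1 f2 : f1 =1 f2 -> gamma_coef f1 = gamma_coef f2.
Proof.
by move=> eq_f; rewrite /gamma_coef; congr (_ / _); apply: eq_bigr => sj _; rewrite eq_f.
Qed.

Lemma eq_gamma_mono f1 f2 : f1 =1 f2 -> gamma_mono f1 = gamma_mono f2.
Proof. by move=> eq_f; apply/mnmP => s; rewrite !gamma_monoE; apply: eq_bigr => j _. Qed.

Lemma mcoeff_qsum N m al : (qsum N m)@_al =
  \sum_(g : {ffun I -> 'I_N.+1} | admissible (gamma_of g) && (weight (gamma_of g) == m)
                                  && (gamma_mono (gamma_of g) == al))
     gamma_coef (gamma_of g).
Proof.
rewrite raddf_sum [RHS]big_mkcondr /=; apply: eq_bigr => g _.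
by rewrite mcoeffZ mcoeffX mulr_natr mulrb.
Qed.

Lemma qsum0 N : qsum N 0 = 1.
Proof.
rewrite /qsum (big_pred1 [ffun=> ord0]) => [|g /=].
  have -> : gamma_mono (gamma_of [ffun=> (ord0 : 'I_N.+1)]) = 0%MM.
    by apply/mnmP => s; rewrite gamma_monoE mnm0E big1 // => j _; rewrite /gamma_of ffunE.
  by rewrite /gamma_coef !big1 ?divr1 ?scale1r ?mpolyX0 // => sj _; rewrite /gamma_of ffunE.
apply/idP/eqP => [/andP [adm_g /eqP wg] | ->]; last first.
  rewrite /weight big1 => [|sj _]; last by rewrite /gamma_of ffunE muln0.
  by rewrite eqxx andbT; apply/forallP => sj; rewrite /gamma_of ffunE implybT.
apply/ffunP => sj; rewrite ffunE; apply: val_inj => /=.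
have [asj | Nasj] := boolP (allowed sj).
  by have := leq_weight1 (gamma_of g) asj; rewrite wg leqn0 => /eqP.
by move/forallP: adm_g => /(_ sj); rewrite Nasj => /eqP.
Qed.

Lemma mcoeff0_qsum N k : (0 < k)%N -> (qsum N k)@_0%MM = 0.
Proof.
move=> k_pos; rewrite mcoeff_qsum big1 // => g /andP [/andP [_ /eqP wg] /eqP mg].
suff : weight (gamma_of g) = 0%N by rewrite wg => k0; rewrite k0 in k_pos.
rewrite /weight big1 // => sj asj.
have := leq_gamma_mono (gamma_of g) asj.
by rewrite mg mnm0E leqn0 /gamma_of => /eqP ->; rewrite muln0.
Qed.

Lemma qsum_widen N m : (m <= N)%N -> qsum m m = qsum N m.
Proof.
move=> le_mN.
pose widen (g : {ffun I -> 'I_m.+1}) : {ffun I -> 'I_N.+1} :=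
  [ffun sj => widen_ord (leq_ltn_trans le_mN (ltnSn N)) (g sj)].
pose narrow (g : {ffun I -> 'I_N.+1}) : {ffun I -> 'I_m.+1} := [ffun sj => inord (g sj)].
have gamma_widen g : gamma_of (widen g) =1 gamma_of g by move=> sj; rewrite /gamma_of ffunE.
rewrite /qsum (reindex_onto widen narrow) /=; last first.
  move=> g /andP [adm_g /eqP wg]; apply/ffunP => sj; rewrite !ffunE; apply: val_inj => /=.
  rewrite inordK // ltnS; have [asj | Nasj] := boolP (allowed sj).
    by rewrite -wg leq_weight1.
  by move/forallP: adm_g => /(_ sj); rewrite Nasj /gamma_of /= => /eqP ->.
symmetry; apply: eq_big => [g | g _].
  rewrite (eq_admissible (gamma_widen g)) (eq_weight (gamma_widen g)).
  have -> : narrow (widen g) == g.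
    by apply/eqP/ffunP => sj; rewrite !ffunE; apply: val_inj; rewrite /= inordK.
  by rewrite andbT.
by rewrite (eq_gamma_coef (gamma_widen g)) (eq_gamma_mono (gamma_widen g)).
Qed.

Section IncrAt.
Variables (e : I) (f : I -> nat).
Hypothesis ae : allowed e.

Lemma admissible_incr_at : admissible (incr_at e f) = admissible f.
Proof.
apply: eq_forallb => sj; rewrite /incr_at.
by case: (sj =P e) => [-> | _]; rewrite ?ae ?addn0.
Qed.

Lemma weight_incr_at : weight (incr_at e f) = (weight f + val e.2)%N.
Proof.
rewrite /weight /incr_at; under eq_bigr do rewrite mulnDr.
rewrite big_split /=; congr (_ + _)%N.
rewrite (bigD1 e) //= eqxx muln1 big1 ?addn0 // => sj /andP [_ /negbTE ->].
by rewrite muln0.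
Qed.

Lemma gamma_mono_incr_at : gamma_mono (incr_at e f) = (gamma_mono f + U_(e.1))%MM.
Proof.
apply/mnmP => s; rewrite mnmDE mnm1E !gamma_monoE /incr_at big_split /=; congr (_ + _)%N.
case: e ae => [s' j'] /= ae'; case: (eqVneq s' s) => [<- | s_neq] /=.
  rewrite (bigD1 j') //= !eqxx big1 ?addn0 // => j /andP [_ /negbTE j_neq].
  by rewrite xpair_eqE j_neq andbF.
by rewrite big1 // => j _; rewrite xpair_eqE eq_sym (negbTE s_neq).
Qed.

Hypothesis hchar : [pchar F] =i pred0.

Lemma gamma_coef_incr_at :
  (f e).+1%:R * gamma_coef (incr_at e f) = var_coef e * gamma_coef f.
Proof.
rewrite /gamma_coef /incr_at.
have num_incr : \prod_(sj | allowed sj && (1 <= val sj.1)%N)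
                  a (val sj.2) (val sj.1).+1 ^+ (f sj + (sj == e))%N =
                \prod_(sj | allowed sj && (1 <= val sj.1)%N)
                  a (val sj.2) (val sj.1).+1 ^+ f sj * var_coef e.
  under eq_bigr do rewrite exprD; rewrite big_split /= /var_coef; congr (_ * _).
  case: ifP => e1.
    rewrite (bigD1 e) ?ae ?e1 //= eqxx expr1 big1 ?mulr1 // => sj /andP [_ /negbTE ->].
    by rewrite expr0.
  rewrite big1 // => sj /andP [_ sj1].
  by case: eqP => [e_sj | _]; rewrite ?expr0 // e_sj e1 in sj1.
have den_incr : \prod_(sj | allowed sj) ((f sj + (sj == e))%N`!)%:R =
                (f e).+1%:R * \prod_(sj | allowed sj) ((f sj)`!)%:R :> F.
  rewrite (bigD1 e) // [in RHS](bigD1 e) //= eqxx addn1 factS natrM -mulrA.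
  by congr (_ * (_ * _)); apply: eq_bigr => sj /andP [_ /negbTE ->]; rewrite addn0.
have Sfe_neq0 : (f e).+1%:R != 0 :> F by move/pcharf0P: hchar => ->.
by rewrite num_incr den_incr invfM mulrCA mulVKf // mulrAC mulrC.
Qed.

End IncrAt.

Section Shift.
Variables (N : nat) (e : I).
Hypothesis ae : allowed e.
Implicit Types g : {ffun I -> 'I_N.+1}.

Definition ffun_incr g : {ffun I -> 'I_N.+1} :=
  [ffun sj => inord (incr_at e (gamma_of g) sj)].

Definition ffun_decr g : {ffun I -> 'I_N.+1} :=
  [ffun sj => inord (gamma_of g sj - (sj == e))].

Lemma gamma_of_incr g :
  (gamma_of g e < N)%N -> gamma_of (ffun_incr g) =1 incr_at e (gamma_of g).
Proof.
move=> lt_ge sj; rewrite /gamma_of ffunE /= /incr_at.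
case: (sj =P e) => [-> | _] /=; first by rewrite addn1 inordK.
by rewrite addn0 inordK ?ltn_ord.
Qed.

(* When [g e = N] the increment wraps around to [0]. *)
Lemma ffun_incr_pos g : (0 < gamma_of (ffun_incr g) e)%N -> (gamma_of g e < N)%N.
Proof.
rewrite /gamma_of ffunE /incr_at eqxx addn1 /=.
have := ltn_ord (g e); rewrite ltnS leq_eqVlt => /orP [/eqP ge | //].
by rewrite /gamma_of /= ge /inord /insubd insubN // ltnn.
Qed.

Lemma ffun_decrK g : (0 < gamma_of g e)%N -> ffun_incr (ffun_decr g) = g.
Proof.
move=> ge_pos; apply/ffunP => sj; apply: val_inj.
rewrite !ffunE /= /incr_at /gamma_of ffunE.
case: (sj =P e) => [-> | _] /=; last by rewrite subn0 addn0 /gamma_of !inord_val.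
have lt_ge1 : (gamma_of g e - 1 < N.+1)%N := leq_ltn_trans (leq_subr 1 _) (ltn_ord (g e)).
by rewrite (inordK lt_ge1) subnK // /gamma_of inord_val.
Qed.

Lemma ffun_incrK g : (gamma_of g e < N)%N -> ffun_decr (ffun_incr g) = g.
Proof.
move=> lt_ge; apply/ffunP => sj; apply: val_inj.
by rewrite ffunE /= (gamma_of_incr lt_ge) /incr_at addnK /gamma_of inord_val.
Qed.

End Shift.

Section Recursion.
Hypothesis hchar : [pchar F] =i pred0.

(* [ffun_incr e] is a bijection from the terms of [qsum N (k - e.2)] at
   [al - U_(e.1)] onto the terms at [al] with [g e > 0]; the factor [g e] is
   absorbed by the factorial [(g e)!]. *)
Lemma sum_gamma_at N e k (al : 'X_{1..d}) : allowed e -> (k <= N)%N -> (0 < al e.1)%N ->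
  \sum_(g : {ffun I -> 'I_N.+1} | admissible (gamma_of g) && (weight (gamma_of g) == k)
                                  && (gamma_mono (gamma_of g) == al))
     (gamma_of g e)%:R * gamma_coef (gamma_of g)
  = if (val e.2 <= k)%N then var_coef e * (qsum N (k - val e.2)%N)@_(al - U_(e.1)) else 0.
Proof.
move=> ae le_kN al_pos.
rewrite (bigID (fun g => 0 < gamma_of g e)%N) /= [X in _ + X]big1 ?addr0; last first.
  by move=> g /andP [_]; rewrite -eqn0Ngt => /eqP ->; rewrite mul0r.
have e2_pos := allowed_pos ae.
case: leqP => [le_e2k | lt_k]; last first.
  rewrite big1 // => g /andP [/andP [/andP [_ /eqP wg] _] ge_pos].
  have := leq_weight (gamma_of g) ae; rewrite wg => /(leq_trans (leq_pmull _ ge_pos)).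
  by rewrite leqNgt lt_k.
rewrite mcoeff_qsum big_distrr (reindex_onto (ffun_incr e) (ffun_decr e)) /=; last first.
  by move=> g /andP [_]; exact: ffun_decrK.
apply: eq_big => g.
  apply/idP/idP.
    case/andP=> /andP [Pincr /ffun_incr_pos lt_ge] _; move: Pincr.
    rewrite (eq_admissible (gamma_of_incr lt_ge)) (eq_weight (gamma_of_incr lt_ge)).
    rewrite (eq_gamma_mono (gamma_of_incr lt_ge)) admissible_incr_at // weight_incr_at //.
    rewrite gamma_mono_incr_at // => /andP [/andP [-> /eqP <-] /eqP <-].
    by rewrite addnK addmK !eqxx.
  case/andP=> /andP [adm_g /eqP wg] /eqP mg.
  have lt_ge : (gamma_of g e < N)%N.
    have := leq_weight (gamma_of g) ae; rewrite wg leq_subRL // -mulSn.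
    by move/(leq_trans (leq_pmulr _ e2_pos))/leq_trans; apply.
  rewrite (eq_admissible (gamma_of_incr lt_ge)) (eq_weight (gamma_of_incr lt_ge)).
  rewrite (eq_gamma_mono (gamma_of_incr lt_ge)) admissible_incr_at // weight_incr_at //.
  rewrite gamma_mono_incr_at // adm_g wg mg subnK // submK ?lep1mP -?lt0n //.
  by rewrite (gamma_of_incr lt_ge) /incr_at !eqxx /= addn1 ffun_incrK ?eqxx.
case/andP=> /andP [_ /ffun_incr_pos lt_ge] _.
rewrite (eq_gamma_coef (gamma_of_incr lt_ge)) (gamma_of_incr lt_ge) /incr_at eqxx addn1.
exact: gamma_coef_incr_at.
Qed.

Lemma mcoeff_qsum_rec N s k (al : 'X_{1..d}) : (k <= N)%N -> (0 < al s)%N ->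
  (al s)%:R * (qsum N k)@_al =
  \sum_(j : 'I_n.+2 | allowed (s, j) && (val j <= k)%N)
     var_coef (s, j) * (qsum N (k - val j)%N)@_(al - U_(s)).
Proof.
move=> le_kN al_pos; rewrite mcoeff_qsum mulr_sumr.
rewrite (eq_bigr (fun g => \sum_(j | allowed (s, j))
                             (gamma_of g (s, j))%:R * gamma_coef (gamma_of g))); last first.
  by move=> g /andP [_ /eqP <-]; rewrite gamma_monoE natr_sum mulr_suml.
rewrite exchange_big [RHS]big_mkcondr /=; apply: eq_bigr => j asj.
by rewrite sum_gamma_at.
Qed.

End Recursion.
End WeightedSum.

Section Main.
Variables (F : fieldType) (d : nat) (a : nat -> nat -> F) (n : nat).
Hypothesis hchar : [pchar F] =i pred0.
Local Notation q k := (@qsum F d a n n k).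
Local Notation L := (@L F d a).
Implicit Types (al : 'X_{1..d}) (s : 'I_d).

Lemma mcoeff_qsum_rec_x1 s k al : val s = 0%N -> (0 < k <= n)%N -> (0 < al s)%N ->
  (al s)%:R * (q k)@_al = (q k.-1)@_(al - U_(s)).
Proof.
move=> s0 /andP [k_pos le_kn] al_pos; rewrite mcoeff_qsum_rec // (big_pred1 (inord 1)).
  by rewrite /var_coef s0 /= inordK // mul1r subn1.
move=> j; rewrite /allowed /= s0 /= orbF -val_eqE /= inordK //.
by case: eqP => // ->; rewrite k_pos.
Qed.

Lemma mcoeff_qsum_rec_xj s k al : (0 < val s)%N -> (k <= n)%N -> (0 < al s)%N ->
  (al s)%:R * (q k)@_al = \sum_(2 <= t < k.+1) a t (val s).+1 * (q (k - t)%N)@_(al - U_(s)).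
Proof.
move=> s_pos le_kn al_pos; rewrite mcoeff_qsum_rec //.
rewrite (big_nat_widen _ _ n.+2) ?ltnS ?leqW // big_geq_mkord.
apply: eq_big => [j | j _]; last by rewrite /var_coef /= s_pos.
have s_neq0 : (val s == 0%N) = false by rewrite eqn0Ngt s_pos.
rewrite /allowed /= s_neq0 s_pos /= ltnS.
case: (leqP j k) => [le_jk | _]; last by rewrite !andbF.
by rewrite (leq_trans le_jk le_kn) !andbT.
Qed.

Lemma qsum1 : (0 < d)%N -> (0 < n)%N -> q 1 = x1 F d.
Proof.
move=> d_pos n_pos; apply: mpoly_eq_lead_var => // [|al j lead_j].
  rewrite mcoeff0_qsum // /x1 mcoeffX; case: eqP => // /mnmP /(_ (Ordinal d_pos)).
  by rewrite mnmE mnm0E.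
have al_pos : (0 < al j)%N by case/andP: lead_j.
have [j0 | j_neq0] := eqVneq (val j) 0%N.
  have -> : x1 F d = 'X_[U_(j)].
    congr 'X_[_]; apply/mnmP => i.
    by rewrite mnmE mnm1E -(inj_eq val_inj) j0 [(0 == _)%N]eq_sym; case: eqP.
  rewrite mcoeff_qsum_rec_x1 ?n_pos // qsum0 mcoeff1 subm1_eq0 // mcoeffX.
  by case: eqP => [<- | _]; rewrite ?mnm1E ?eqxx ?mul1r ?mulr0.
have j_pos : (0 < val j)%N by rewrite lt0n.
rewrite mcoeff_qsum_rec_xj // big_geq // /x1 mcoeffX; case: eqP => [al_x1 | _].
  by move: al_pos; rewrite -al_x1 mnmE (negbTE j_neq0).
by rewrite !mulr0.
Qed.

Lemma qsumSS k : (k.+2 <= n)%N -> (forall i, (i <= k.+1)%N -> q i = L i) ->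
  q k.+2 = L k.+2.
Proof.
move=> le_kn IH; rewrite L_step.
have Ls_q i : (i <= k.+1)%N -> nth 0 (@Lseq F d a k.+1) i = q i.
  by move=> le_ik; rewrite nth_Lseq // IH.
apply: mpoly_eq_lead_var => // [|al j lead_j].
  by rewrite mcoeff0_qsum // mcoeff0_Lstep.
have al_pos : (0 < al j)%N by case/andP: lead_j.
rewrite (mcoeff_Lstep a hchar _ lead_j) size_Lseq.
case: eqP => [j0 | /eqP j_neq0]; first by rewrite mcoeff_qsum_rec_x1 // Ls_q.
have j_pos : (0 < val j)%N by rewrite lt0n.
rewrite mcoeff_qsum_rec_xj // big_nat_recr //= subnn qsum0; congr (_ + _).
by apply: eq_big_nat => t /andP [le2t lt_tk]; rewrite Ls_q //; lia.
Qed.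

Lemma qsum_L k : (0 < d)%N -> (k <= n)%N -> q k = L k.
Proof.
move=> d_pos; elim: k {-2}k (leqnn k) => [|k IH] i le_ik le_in.
  by move: le_ik; rewrite leqn0 => /eqP ->; rewrite qsum0.
case: i le_ik le_in => [|[|i]] le_ik le_in; first by rewrite qsum0.
  exact: qsum1.
by apply: qsumSS => // j le_ji; apply: IH; lia.
Qed.

End Main.

Theorem proposition4 (F : fieldType) (hchar : [pchar F] =i pred0)
  (d : nat) (hd : (2 <= d)%N) (n : nat) (a : nat -> nat -> F) :
  forall m : nat, (m <= n)%N -> @qstar F d a n m = @L F d a m.
Proof.
move=> m le_mn; rewrite qstar_qsum_id (@qsum_widen F d a n n m le_mn).
exact: (@qsum_L F d a n hchar m (ltnW hd) le_mn).
Qed.
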